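(* Let $\kappa$ be an algebraically closed field of characteristic zero, complete for a non-trivial non-Archimedean absolute value. Let $a,b\in\kappa$ with $|a|=1$, let $L(z)=az+b$, let $f\in\mathcal{M}(\kappa)$ be a meromorphic function not identically zero, and let $m$ be a positive integer. Then for every $r>|b|$, $$\mu(r,f\circ L)=\mu(r,f),\qquad \mu\!\left(r,\frac{f\circ L}{f}\right)=1,\qquad \mu\!\left(r,\frac{\Delta_L^mf}{f}\right)\le1.$$
   Context: $\mathcal{M}(\kappa)$ is the field of meromorphic functions over $\kappa$, i.e. quotients $g/h$ of entire functions (power series converging on all of $\kappa$), $h\not\equiv0$. For entire $g=\sum a_nz^n$, $\mu(r,g)=\max_n|a_n|r^n$; $\mu(r,g/h)=\mu(r,g)/\mu(r,h)$. $\Delta_Lf=f\circ L-f$ and $\Delta_L^mf=\Delta_L(\Delta_L^{m-1}f)$. *)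

From HB Require Import structures.
From mathcomp Require Import all_boot all_order all_algebra.
From mathcomp Require Import boolp classical_sets reals.
Set Implicit Arguments. Unset Strict Implicit. Unset Printing Implicit Defensive.
Import Order.TTheory GRing.Theory Num.Theory.
Local Open Scope ring_scope.
Local Open Scope classical_set_scope.

Definition abs_conv (R : realType) (K : nzRingType) (abs : K -> R)
  (u : nat -> K) (l : K) : Prop :=
  forall e : R, 0 < e -> exists N : nat, forall n : nat, (N <= n)%N -> abs (u n - l) < e.

Definition abs_cauchy (R : realType) (K : nzRingType) (abs : K -> R)
  (u : nat -> K) : Prop :=
  forall e : R, 0 < e -> exists N : nat, forall n m : nat,
    (N <= n)%N -> (N <= m)%N -> abs (u n - u m) < e.

Definition nonarch_complete_field (R : realType) (K : closedFieldType)
  (abs : K -> R) : Prop :=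
  [pchar K] =i pred0 /\
  (forall x : K, 0 <= abs x) /\
  (forall x : K, abs x = 0 <-> x = 0) /\
  (forall x y : K, abs (x * y) = abs x * abs y) /\
  (forall x y : K, abs (x + y) <= Num.max (abs x) (abs y)) /\
  (exists x : K, abs x != 0 /\ abs x != 1) /\
  (forall u : nat -> K, abs_cauchy abs u -> exists l, abs_conv abs u l).

Definition entire_coefs (R : realType) (K : nzRingType) (abs : K -> R)
  (a : nat -> K) : Prop :=
  forall r : R, 0 < r -> forall e : R, 0 < e ->
    exists N : nat, forall n : nat, (N <= n)%N -> abs (a n) * r ^+ n < e.

Definition entire_rep (R : realType) (K : nzRingType) (abs : K -> R)
  (F : K -> K) (a : nat -> K) : Prop :=
  entire_coefs abs a /\
  forall z : K, abs_conv abs (fun n => \sum_(i < n) a i * z ^+ i) (F z).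

Definition entire (R : realType) (K : nzRingType) (abs : K -> R) (F : K -> K) : Prop :=
  exists a, entire_rep abs F a.

(* The (unique) Taylor coefficients of an entire function (0 otherwise). *)
Definition coefs (R : realType) (K : nzRingType) (abs : K -> R) (F : K -> K) : nat -> K :=
  match pselect (exists a, entire_rep abs F a) with
  | left H => projT1 (cid H)
  | right _ => fun _ => 0
  end.

Definition mu_entire (R : realType) (K : nzRingType) (abs : K -> R)
  (r : R) (F : K -> K) : R :=
  sup (range (fun n : nat => abs (coefs abs F n) * r ^+ n)).

(* Meromorphic functions.  A meromorphic function is modelled as a function *)
(* f : K -> K (with arbitrary values at poles) for which there are entire g *)
(* and h, h not identically zero, with f = g / h outside the zero set of    *)
(* some entire function k not identically zero (a "thin" exceptional set).  *)

Definition mero_rep (R : realType) (K : fieldType) (abs : K -> R)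
  (f g h : K -> K) : Prop :=
  [/\ entire abs g, entire abs h, (exists z, h z != 0) &
      exists k : K -> K, [/\ entire abs k, (exists z, k z != 0) &
        forall z, k z != 0 -> h z != 0 /\ f z = g z / h z]].

Definition meromorphic (R : realType) (K : fieldType) (abs : K -> R)
  (f : K -> K) : Prop :=
  exists gh : (K -> K) * (K -> K), mero_rep abs f gh.1 gh.2.

Definition mero_zero (R : realType) (K : fieldType) (abs : K -> R)
  (f : K -> K) : Prop :=
  exists k : K -> K, [/\ entire abs k, (exists z, k z != 0) &
    forall z, k z != 0 -> f z = 0].

(* mu(r, g/h) = mu(r, g) / mu(r, h) (independent of the representation). *)
Definition mu (R : realType) (K : fieldType) (abs : K -> R)
  (r : R) (f : K -> K) : R :=
  match pselect (meromorphic abs f) with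
  | left H => let gh := projT1 (cid H) in
              mu_entire abs r gh.1 / mu_entire abs r gh.2
  | right _ => 0
  end.

Definition DeltaL (K : nzRingType) (L : K -> K) (f : K -> K) : K -> K :=
  fun z => f (L z) - f z.

Definition DeltaLn (K : nzRingType) (L : K -> K) (m : nat) (f : K -> K) : K -> K :=
  iter m (DeltaL L) f.

From HB Require Import structures.
From mathcomp Require Import all_boot all_order all_algebra.
From mathcomp Require Import boolp classical_sets reals.
From mathcomp Require Import ring lra zify.
Import Order.TTheory GRing.Theory Num.Theory.
Local Open Scope ring_scope.
Set Implicit Arguments. Unset Strict Implicit.

(* For an entire function g = \sum a_n z^n and r > 0, mu(r, g) = max_n |a_n| r^n is
   a Gauss norm: it is ultrametric, and multiplicative on Cauchy products because the
   largest index at which each factor attains its maximum yields a term of the product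
   that strictly dominates all the others.  For L z = a z + b with |a| = 1 and
   |b| <= r, the coefficients of g o L are \sum_n a_n binom(n, k) b^(n-k), and since
   binomial coefficients have absolute value <= 1 each satisfies
   |c_k| r^k <= mu(r, g); the inverse affine map gives equality.  Writing f = g / h,
   this yields mu(r, f o L) = mu(r, f), and multiplicativity gives
   mu(r, (f o L) / f) = 1.  Finally
   Delta_L f = (g(L) h - g h(L)) / (h(L) h) has mu at most mu(r, f), so by induction
   mu(r, Delta_L^m f) <= mu(r, f). *)

Lemma bernoulli_ineq (R : realFieldType) (h : R) n :
  0 <= h -> 1 + n%:R * h <= (1 + h) ^+ n.
Proof.
move=> h0; elim: n => [|n IH]; first by rewrite mul0r addr0 expr0.
rewrite exprS -addn1 natrD.
have hn : 0 <= n%:R :> R by [].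
have : 0 <= (1 + h) ^+ n by apply: exprn_ge0; lra.
nra.
Qed.

Lemma lerXn2r_ge0 (F : numDomainType) (x y : F) n : 0 <= x -> x <= y -> x ^+ n <= y ^+ n.
Proof. by move=> hx hxy; apply: lerXn2r; rewrite ?nnegrE // (le_trans hx hxy). Qed.

Lemma eventually_bounded (R : realDomainType) (f : nat -> R) N C :
  (forall n, (N <= n)%N -> f n <= C) -> exists B, 0 < B /\ forall n, f n <= B.
Proof.
move=> hC.
have [B hB] : exists B, forall n, (n < N)%N -> f n <= B.
  elim: (N) => [|k [B hB]]; first by exists 0.
  exists (Num.max B (f k)) => n; rewrite ltnS leq_eqVlt => /orP [/eqP ->|h].
    by rewrite le_max lexx orbT.
  by rewrite le_max hB.
exists (Num.max 1 (Num.max B C)); split; first by rewrite lt_max ltr01.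
move=> n; rewrite !le_max; case: (ltnP n N) => hn.
  by rewrite hB ?orbT.
by rewrite hC ?orbT.
Qed.

Lemma sum_ord_split (V : nmodType) (u : nat -> V) n m : (n <= m)%N ->
  \sum_(i < m) u i = \sum_(i < n) u i + \sum_(n <= i < m) u i.
Proof. by move=> h; rewrite -!(big_mkord xpredT) (@big_cat_nat _ _ _ n 0 m _ _ (leq0n n) h). Qed.

Lemma sum_cauchy_prod (V : pzRingType) (u v : nat -> V) N :
  \sum_(n < N) \sum_(i < n.+1) u i * v (n - i)%N =
  \sum_(i < N) u i * \sum_(j < N - i) v j.
Proof.
elim: N => [|N IH]; first by rewrite !big_ord0.
rewrite big_ord_recr /= IH.
transitivity (\sum_(i < N.+1) u i * \sum_(j < N - i) v j +
              \sum_(i < N.+1) u i * v (N - i)%N).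
  by rewrite [X in _ = X + _]big_ord_recr /= subnn big_ord0 mulr0 addr0.
rewrite -big_split /=; apply: eq_bigr => i _.
have hi : (i <= N)%N by rewrite -ltnS.
by rewrite -mulrDr subSn // big_ord_recr.
Qed.

Section NonArchimedean.
Variables (R : realType) (K : closedFieldType) (abs : K -> R).
Hypothesis Habs : nonarch_complete_field abs.

Lemma abs_ge0 x : 0 <= abs x.
Proof. by case: Habs => _ [H _]. Qed.
Lemma abs_eq0 x : abs x = 0 <-> x = 0.
Proof. by case: Habs => _ [_ [H _]]. Qed.
Lemma absM x y : abs (x * y) = abs x * abs y.
Proof. by case: Habs => _ [_ [_ [H _]]]. Qed.
Lemma absD_le_max x y : abs (x + y) <= Num.max (abs x) (abs y).
Proof. by case: Habs => _ [_ [_ [_ [H _]]]]. Qed.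

Lemma abs0 : abs 0 = 0.
Proof. by apply/abs_eq0. Qed.
Lemma abs_gt0 x : x != 0 -> 0 < abs x.
Proof. by move=> hx; rewrite lt_def abs_ge0 andbT; apply: contra_neq hx => /abs_eq0. Qed.
Lemma abs1 : abs 1 = 1.
Proof.
have h1 : abs 1 != 0 by rewrite gt_eqF ?abs_gt0 ?oner_neq0.
by apply: (mulfI h1); rewrite -absM !mulr1.
Qed.
Lemma absN1 : abs (-1) = 1.
Proof.
have := absM (-1) (-1); rewrite mulrNN mulr1 abs1 => h.
have h0 := abs_ge0 (-1).
have : (abs (-1) - 1) * (abs (-1) + 1) = 0 by rewrite mulrDr !mulrBl -h; ring.
by move/eqP; rewrite mulf_eq0 => /orP [/eqP|/eqP]; lra.
Qed.
Lemma absN x : abs (- x) = abs x.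
Proof. by rewrite -mulN1r absM absN1 mul1r. Qed.
Lemma abs_subC x y : abs (x - y) = abs (y - x).
Proof. by rewrite -absN opprB. Qed.
Lemma absX x n : abs (x ^+ n) = abs x ^+ n.
Proof. by elim: n => [|n IH]; rewrite ?expr0 ?abs1 // !exprS absM IH. Qed.
Lemma absV x : abs (x^-1) = (abs x)^-1.
Proof.
have [->|hx] := eqVneq x 0; first by rewrite invr0 abs0 invr0.
have hx' : abs x != 0 by rewrite gt_eqF // abs_gt0.
by apply: (mulfI hx'); rewrite -absM !mulfV // abs1.
Qed.

Lemma absD_le x y M : abs x <= M -> abs y <= M -> abs (x + y) <= M.
Proof. by move=> hx hy; apply: le_trans (absD_le_max x y) _; rewrite ge_max hx hy. Qed.
Lemma absD_lt x y M : abs x < M -> abs y < M -> abs (x + y) < M.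
Proof. by move=> hx hy; apply: le_lt_trans (absD_le_max x y) _; rewrite gt_max hx hy. Qed.
Lemma absD_eq x y : abs y < abs x -> abs (x + y) = abs x.
Proof.
move=> h; apply/eqP; rewrite eq_le absD_le ?(ltW h) //=.
have := absD_le_max (x + y) (- y); rewrite addrK absN le_max => /orP [//|h2].
by move: (lt_le_trans h h2); rewrite ltxx.
Qed.
Lemma abs_natr_le1 n : abs (n%:R) <= 1.
Proof.
elim: n => [|n IH]; first by rewrite abs0.
by rewrite -addn1 natrD absD_le // abs1.
Qed.

Lemma abs_sum_le (I : Type) (r : seq I) (P : pred I) (F : I -> K) M :
  0 <= M -> (forall i, P i -> abs (F i) <= M) -> abs (\sum_(i <- r | P i) F i) <= M.
Proof.
move=> hM hF; apply: (big_ind (fun x => abs x <= M)) => //; first by rewrite abs0.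
by move=> x y; apply: absD_le.
Qed.
Lemma abs_sum_lt (I : Type) (r : seq I) (P : pred I) (F : I -> K) M :
  0 < M -> (forall i, P i -> abs (F i) < M) -> abs (\sum_(i <- r | P i) F i) < M.
Proof.
move=> hM hF; apply: (big_ind (fun x => abs x < M)) => //; first by rewrite abs0.
by move=> x y; apply: absD_lt.
Qed.
Lemma abs_sum_nat_le (u : nat -> K) n m M : 0 <= M ->
  (forall i, (n <= i)%N -> abs (u i) <= M) -> abs (\sum_(n <= i < m) u i) <= M.
Proof.
move=> hM h; rewrite big_nat_cond; apply: abs_sum_le => // i /andP [/andP [hi _] _].
exact: h.
Qed.
Lemma abs_sum_nat_lt (u : nat -> K) n m M : 0 < M ->
  (forall i, (n <= i)%N -> abs (u i) < M) -> abs (\sum_(n <= i < m) u i) < M.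
Proof.
move=> hM h; rewrite big_nat_cond; apply: abs_sum_lt => // i /andP [/andP [hi _] _].
exact: h.
Qed.

Lemma exists_abs_small (d : R) : 0 < d -> exists z : K, 0 < abs z < d.
Proof.
move=> hd.
have [y /andP[hy0 hy1]] : exists y : K, 0 < abs y < 1.
  case: Habs => _ [_ [_ [_ [_ [[x [hx0 hx1]] _]]]]].
  have ax0 : 0 < abs x by rewrite lt_def hx0 abs_ge0.
  case: (ltP (abs x) 1) => h; first by exists x; rewrite ax0 h.
  exists x^-1; rewrite absV invr_gt0 ax0 /= invf_lt1 //.
  by rewrite lt_def hx1 h.
set t := abs y in hy0 hy1.
set h := t^-1 - 1.
have hh : 0 < h by rewrite /h subr_gt0 invf_gt1.
have hq : 0 <= (h * d)^-1 by rewrite invr_ge0 mulr_ge0 // ltW.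
set n := Num.Def.archi_bound ((h * d)^-1).
have hn : (h * d)^-1 < n%:R := archi_boundP hq.
exists (y ^+ n); rewrite absX exprn_gt0 //=.
have hb := bernoulli_ineq n (ltW hh).
have ht : 1 + h = t^-1 by rewrite /h; ring.
rewrite ht in hb.
have hdi : d^-1 = (h * d)^-1 * h by field; rewrite !gt_eqF.
have : d^-1 < t^-1 ^+ n.
  apply: lt_le_trans hb; rewrite hdi.
  have : (h * d)^-1 * h < n%:R * h by rewrite ltr_pM2r.
  lra.
by rewrite exprVn ltf_pV2 ?posrE ?exprn_gt0.
Qed.

Lemma exists_abs_small3 d1 d2 d3 : 0 < d1 -> 0 < d2 -> 0 < d3 ->
  exists z, [/\ 0 < abs z < d1, 0 < abs z < d2 & 0 < abs z < d3].
Proof.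
move=> h1 h2 h3; have hd : 0 < Num.min (Num.min d1 d2) d3 by rewrite !lt_min h1 h2 h3.
have [z /andP [hz0 hz]] := exists_abs_small hd.
by exists z; move: hz; rewrite !lt_min hz0 => /andP [/andP [-> ->] ->].
Qed.

Definition null_seq (u : nat -> K) := forall e : R, 0 < e ->
  exists N : nat, forall n : nat, (N <= n)%N -> abs (u n) < e.

Lemma null_seq_bounded u : null_seq u -> exists B, 0 < B /\ forall n, abs (u n) <= B.
Proof.
move=> h; have [N hN] := h 1 ltr01.
by apply: (@eventually_bounded _ _ N 1) => n /hN /ltW.
Qed.

Lemma abs_conv_ext u v l : (forall n, v n = u n) -> abs_conv abs u l -> abs_conv abs v l.
Proof. by move=> h hu e /hu [N hN]; exists N => n hn; rewrite h; apply: hN. Qed.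

Lemma abs_conv_cst c : abs_conv abs (fun _ => c) c.
Proof. by move=> e he; exists 0%N => n _; rewrite subrr abs0. Qed.

Lemma abs_conv_uniq u l1 l2 : abs_conv abs u l1 -> abs_conv abs u l2 -> l1 = l2.
Proof.
move=> h1 h2; apply/eqP; rewrite -subr_eq0; apply/eqP/abs_eq0/eqP.
rewrite eq_le abs_ge0 andbT leNgt; apply/negP => he.
have [N1 hN1] := h1 _ he; have [N2 hN2] := h2 _ he.
set n := maxn N1 N2.
suff : abs (l1 - l2) < abs (l1 - l2) by rewrite ltxx.
rewrite {1}(_ : l1 - l2 = (u n - l2) - (u n - l1)); last by ring.
by apply: absD_lt; rewrite ?absN; [apply: hN2 | apply: hN1]; rewrite ?leq_maxl ?leq_maxr.
Qed.

Lemma abs_conv_null_diff u v l : abs_conv abs u l -> null_seq (fun n => v n - u n) ->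
  abs_conv abs v l.
Proof.
move=> hu hv e he; have [N1 hN1] := hu e he; have [N2 hN2] := hv e he.
exists (maxn N1 N2) => n hn.
have -> : v n - l = (v n - u n) + (u n - l) by ring.
by apply: absD_lt; [apply: hN2 | apply: hN1]; apply: leq_trans hn;
  rewrite ?leq_maxl ?leq_maxr.
Qed.

Lemma abs_convB u v l m : abs_conv abs u l -> abs_conv abs v m ->
  abs_conv abs (fun n => u n - v n) (l - m).
Proof.
move=> hu hv e he; have [N1 hN1] := hu e he; have [N2 hN2] := hv e he.
exists (maxn N1 N2) => n hn.
have -> : u n - v n - (l - m) = (u n - l) + - (v n - m) by ring.
by apply: absD_lt; rewrite ?absN; [apply: hN1 | apply: hN2]; apply: leq_trans hn;
  rewrite ?leq_maxl ?leq_maxr.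
Qed.

Lemma abs_conv_bounded u l : abs_conv abs u l -> exists B, 0 < B /\ forall n, abs (u n) <= B.
Proof.
move=> h; have [N hN] := h 1 ltr01.
apply: (@eventually_bounded _ _ N (Num.max 1 (abs l))) => n /hN hn.
rewrite (_ : u n = (u n - l) + l); last by ring.
by apply: absD_le; rewrite le_max ?(ltW hn) ?lexx ?orbT.
Qed.

Lemma abs_convM u v l m : abs_conv abs u l -> abs_conv abs v m ->
  abs_conv abs (fun n => u n * v n) (l * m).
Proof.
move=> hu hv e he.
have [B [hB0 hB]] := abs_conv_bounded hu.
have hm1 : 0 < abs m + 1 by have := abs_ge0 m; lra.
have [N1 hN1] := hu (e / (abs m + 1)) (divr_gt0 he hm1).
have [N2 hN2] := hv (e / B) (divr_gt0 he hB0).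
exists (maxn N1 N2) => n hn.
have -> : u n * v n - l * m = u n * (v n - m) + (u n - l) * m by ring.
have h1 := hN1 n (leq_trans (leq_maxl _ _) hn).
have h2 := hN2 n (leq_trans (leq_maxr _ _) hn).
rewrite ltr_pdivlMr // in h1; rewrite ltr_pdivlMr // in h2.
apply: absD_lt; rewrite absM.
- by apply: le_lt_trans h2; rewrite mulrC ler_wpM2l ?abs_ge0.
- by apply: le_lt_trans h1; rewrite ler_wpM2l ?abs_ge0 // lerDl.
Qed.

Lemma series_conv_of_null u : null_seq u ->
  exists l, abs_conv abs (fun N => \sum_(i < N) u i) l.
Proof.
move=> hu; case: Habs => _ [_ [_ [_ [_ [_ hcomplete]]]]].
apply: hcomplete => e he; have [N hN] := hu e he; exists N => n m hn hm.
wlog hnm : n m hn hm / (n <= m)%N.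
  move=> W; case: (leqP n m) => h; first exact: W.
  by rewrite abs_subC; apply: W => //; apply: ltnW.
rewrite (sum_ord_split u hnm) opprD addrA subrr add0r absN.
by apply: abs_sum_nat_lt => // i hi; apply: hN; apply: leq_trans hi.
Qed.

Lemma abs_series_tail_le (u : nat -> K) l M N0 :
  abs_conv abs (fun N => \sum_(i < N) u i) l -> 0 <= M ->
  (forall i, (N0 <= i)%N -> abs (u i) <= M) -> abs (l - \sum_(i < N0) u i) <= M.
Proof.
move=> hl hM hu; rewrite leNgt; apply/negP => hgt.
have he : 0 < abs (l - \sum_(i < N0) u i) by apply: le_lt_trans hgt.
have [N hN] := hl _ he.
set n := maxn N N0.
have hn : (N0 <= n)%N by apply: leq_maxr.
suff : abs (l - \sum_(i < N0) u i) < abs (l - \sum_(i < N0) u i) by rewrite ltxx.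
rewrite {1}(_ : l - _ = - (\sum_(i < n) u i - l) +
   (\sum_(i < n) u i - \sum_(i < N0) u i)); last by ring.
apply: absD_lt; first by rewrite absN hN ?leq_maxl.
rewrite (sum_ord_split u hn) addrAC subrr add0r.
by apply: le_lt_trans hgt; apply: abs_sum_nat_le.
Qed.

Lemma abs_conv_series_cauchy_prod (u v : nat -> K) U V : null_seq u -> null_seq v ->
  abs_conv abs (fun N => \sum_(i < N) u i) U ->
  abs_conv abs (fun N => \sum_(i < N) v i) V ->
  abs_conv abs (fun N => \sum_(n < N) \sum_(i < n.+1) u i * v (n - i)%N) (U * V).
Proof.
move=> hu hv hU hV.
apply: (abs_conv_null_diff (abs_convM hU hV)) => e he.
have [Bu [hBu0 hBu]] := null_seq_bounded hu.
have [Bv [hBv0 hBv]] := null_seq_bounded hv.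
have [N1 hN1] := hu (e / Bv) (divr_gt0 he hBv0).
have [N2 hN2] := hV (e / Bu) (divr_gt0 he hBu0).
exists (N1 + N2)%N => N hN.
rewrite sum_cauchy_prod mulr_suml -sumrB.
apply: abs_sum_lt => // i _.
rewrite -mulrBr absM.
set d := \sum_(j < N - i) v j - \sum_(j < N) v j.
have hd : abs d <= Bv.
  rewrite /d (sum_ord_split v (leq_subr i N)) opprD addrA subrr add0r absN.
  by apply: abs_sum_nat_le => //; apply: ltW.
case: (leqP N1 i) => h.
  have h1 := hN1 i h; rewrite ltr_pdivlMr // in h1.
  by apply: le_lt_trans h1; rewrite ler_wpM2l ?abs_ge0.
have h3 : abs d < e / Bu.
  rewrite /d (_ : _ - _ = (\sum_(j < N - i) v j - V) + - (\sum_(j < N) v j - V));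
    last by ring.
  by apply: absD_lt; rewrite ?absN hN2 //; lia.
rewrite ltr_pdivlMr // in h3.
by apply: le_lt_trans h3; rewrite mulrC ler_wpM2l ?abs_ge0.
Qed.

Local Notation EC := (entire_coefs abs).

Definition mu_coef (r : R) (a : nat -> K) := sup (range (fun n : nat => abs (a n) * r ^+ n)).

Lemma entire_coefs_bounded a r : EC a -> 0 < r ->
  exists B, 0 < B /\ forall n, abs (a n) * r ^+ n <= B.
Proof.
move=> ha hr; have [N hN] := ha r hr 1 ltr01.
by apply: (@eventually_bounded _ _ N 1) => n /hN /ltW.
Qed.

Lemma entire_coefs_null_terms a z : EC a -> null_seq (fun n => a n * z ^+ n).
Proof.
move=> ha e he.
have hr : 0 < Num.max (abs z) 1 by rewrite lt_max ltr01 orbT.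
have [N hN] := ha _ hr e he; exists N => n hn.
apply: le_lt_trans (hN n hn).
by rewrite absM absX ler_wpM2l ?abs_ge0 // lerXn2r_ge0 ?abs_ge0 // le_max lexx.
Qed.

Lemma mu_coef_ub a r n : EC a -> 0 < r -> abs (a n) * r ^+ n <= mu_coef r a.
Proof.
move=> ha hr; have [B [_ hB]] := entire_coefs_bounded ha hr.
by apply: ub_le_sup; [exists B => _ [k _ <-] | exists n].
Qed.

Lemma mu_coef_le a r M : (forall n, abs (a n) * r ^+ n <= M) -> mu_coef r a <= M.
Proof. by move=> h; apply: ge_sup; [exists (abs (a 0%N) * r ^+ 0); exists 0%N | move=> _ [n _ <-]]. Qed.

Lemma mu_coef_ge0 a r : EC a -> 0 < r -> 0 <= mu_coef r a.
Proof. by move=> ha hr; apply: le_trans (mu_coef_ub 0 ha hr); rewrite expr0 mulr1 abs_ge0. Qed.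

Lemma mu_coef_gt0 a r : EC a -> 0 < r -> (exists n, a n != 0) -> 0 < mu_coef r a.
Proof.
move=> ha hr [n hn]; apply: lt_le_trans (mu_coef_ub n ha hr).
by rewrite mulr_gt0 ?abs_gt0 ?exprn_gt0.
Qed.

Lemma mu_coef_ext a c r : (forall n, abs (a n) = abs (c n)) -> mu_coef r a = mu_coef r c.
Proof. by move=> h; rewrite /mu_coef (_ : (fun n => _) = (fun n => abs (c n) * r ^+ n)) // funeqE => n; rewrite h. Qed.

(* As |a_n| r^n -> 0, the supremum is attained, and at finitely many indices only. *)
Lemma mu_coef_attained a r : EC a -> 0 < r -> 0 < mu_coef r a ->
  exists i0, abs (a i0) * r ^+ i0 = mu_coef r a /\
    forall n, (i0 < n)%N -> abs (a n) * r ^+ n < mu_coef r a.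
Proof.
move=> ha hr; set S := mu_coef r a => hS.
have [N hN] := ha r hr (S / 2) (divr_gt0 hS (ltr0Sn _ 1)).
pose P n := abs (a n) * r ^+ n == S.
have exP : exists n, P n.
  apply/not_existsP => hne.
  have hlt n : abs (a n) * r ^+ n < S.
    by rewrite lt_def mu_coef_ub // andbT; apply/negP => /eqP h; apply: (hne n); apply/eqP.
  have [M [hMS hM]] : exists M, M < S /\ forall n, (n < N)%N -> abs (a n) * r ^+ n <= M.
    elim: (N) => [|k [M [hM1 hM2]]]; first by exists 0.
    exists (Num.max M (abs (a k) * r ^+ k)); split; first by rewrite gt_max hM1 hlt.
    move=> n; rewrite ltnS leq_eqVlt => /orP [/eqP ->|h]; rewrite le_max ?lexx ?orbT //.
    by rewrite hM2.
  have : S <= Num.max M (S / 2).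
    apply: mu_coef_le => n; rewrite le_max; case: (ltnP n N) => hn; first by rewrite hM.
    by rewrite (ltW (hN _ hn)) orbT.
  by rewrite le_max => /orP []; lra.
have ubP n : P n -> (n <= N)%N.
  move=> /eqP hn; rewrite leqNgt; apply/negP => hn2.
  by have := hN n (ltnW hn2); rewrite hn; lra.
case: (ex_maxnP exP ubP) => i0 /eqP hi0 hmax.
exists i0; split => // n hn; rewrite lt_def mu_coef_ub // andbT.
apply/negP => /eqP h; have := hmax n; rewrite /P h eqxx => /(_ isT).
by rewrite leqNgt hn.
Qed.

Definition cauchy_prod (a c : nat -> K) n := \sum_(i < n.+1) a i * c (n - i)%N.

Lemma abs_cauchy_term a c r n i : (i <= n)%N ->
  abs (a i * c (n - i)%N) * r ^+ n =
  (abs (a i) * r ^+ i) * (abs (c (n - i)%N) * r ^+ (n - i)).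
Proof.
move=> h; have e : r ^+ n = r ^+ i * r ^+ (n - i) by rewrite -exprD subnKC.
by rewrite absM e; ring.
Qed.

Lemma entire_coefs_cauchy_prod a c : EC a -> EC c -> EC (cauchy_prod a c).
Proof.
move=> ha hc r hr e he.
have [Ba [hBa0 hBa]] := entire_coefs_bounded ha hr.
have [Bc [hBc0 hBc]] := entire_coefs_bounded hc hr.
have [Na hNa] := ha r hr (e / Bc) (divr_gt0 he hBc0).
have [Nc hNc] := hc r hr (e / Ba) (divr_gt0 he hBa0).
exists (Na + Nc)%N => n hn.
have hrn : 0 < r ^+ n by rewrite exprn_gt0.
rewrite -ltr_pdivlMr //; apply: abs_sum_lt; first by rewrite divr_gt0.
move=> i _; rewrite ltr_pdivlMr // abs_cauchy_term; last by rewrite -ltnS.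
have h0a : 0 <= abs (a i) * r ^+ i by rewrite mulr_ge0 ?abs_ge0 ?exprn_ge0 ?ltW.
have h0c : 0 <= abs (c (n - i)%N) * r ^+ (n - i)
  by rewrite mulr_ge0 ?abs_ge0 ?exprn_ge0 ?ltW.
case: (leqP Na i) => hi.
  have := hNa i hi; rewrite ltr_pdivlMr // => h1.
  by apply: le_lt_trans h1; rewrite ler_wpM2l.
have hni : (Nc <= n - i)%N by lia.
have := hNc _ hni; rewrite ltr_pdivlMr // => h1.
by apply: le_lt_trans h1; rewrite mulrC ler_wpM2l.
Qed.

Lemma mu_coef_cauchy_prod_le a c r : EC a -> EC c -> 0 < r ->
  mu_coef r (cauchy_prod a c) <= mu_coef r a * mu_coef r c.
Proof.
move=> ha hc hr; apply: mu_coef_le => n.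
have hrn : 0 < r ^+ n by rewrite exprn_gt0.
rewrite -ler_pdivlMr //; apply: abs_sum_le.
  by rewrite divr_ge0 ?mulr_ge0 ?mu_coef_ge0 ?ltW.
move=> i _; rewrite ler_pdivlMr // abs_cauchy_term; last by rewrite -ltnS.
by apply: ler_pM; rewrite ?mu_coef_ub // mulr_ge0 ?abs_ge0 // exprn_ge0 // ltW.
Qed.

Section DominantTerm.
Variables (a c : nat -> K) (r : R) (i0 j0 : nat).
Hypotheses (ha : EC a) (hc : EC c) (hr : 0 < r).
Hypotheses (ha0 : 0 < mu_coef r a) (hc0 : 0 < mu_coef r c).
Hypothesis hi0 : forall n, (i0 < n)%N -> abs (a n) * r ^+ n < mu_coef r a.
Hypothesis hj0 : forall n, (j0 < n)%N -> abs (c n) * r ^+ n < mu_coef r c.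

Lemma abs_cauchy_term_lt i : (i <= i0 + j0)%N -> i != i0 ->
  (abs (a i) * r ^+ i) * (abs (c (i0 + j0 - i)%N) * r ^+ (i0 + j0 - i)) <
  mu_coef r a * mu_coef r c.
Proof.
move=> hin hii.
have h0a : 0 <= abs (a i) * r ^+ i by rewrite mulr_ge0 ?abs_ge0 ?exprn_ge0 ?ltW.
set j := (i0 + j0 - i)%N.
have h0c : 0 <= abs (c j) * r ^+ j by rewrite mulr_ge0 ?abs_ge0 ?exprn_ge0 ?ltW.
case: (ltngtP i i0) => h; last by rewrite h eqxx in hii.
  apply: le_lt_trans (_ : mu_coef r a * (abs (c j) * r ^+ j) < _).
    by rewrite ler_wpM2r ?mu_coef_ub.
  by rewrite ltr_pM2l // hj0 // /j; lia.
apply: le_lt_trans (_ : (abs (a i) * r ^+ i) * mu_coef r c < _).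
  by rewrite ler_wpM2l ?mu_coef_ub.
by rewrite ltr_pM2r // hi0.
Qed.

End DominantTerm.

Lemma mu_coef_cauchy_prod_ge a c r : EC a -> EC c -> 0 < r ->
  mu_coef r a * mu_coef r c <= mu_coef r (cauchy_prod a c).
Proof.
move=> ha hc hr; have hac := entire_coefs_cauchy_prod ha hc.
have [ha0|ha0] := eqVneq (mu_coef r a) 0; first by rewrite ha0 mul0r mu_coef_ge0.
have [hc0|hc0] := eqVneq (mu_coef r c) 0; first by rewrite hc0 mulr0 mu_coef_ge0.
have ha0' : 0 < mu_coef r a by rewrite lt_def ha0 mu_coef_ge0.
have hc0' : 0 < mu_coef r c by rewrite lt_def hc0 mu_coef_ge0.
have [i0 [hi0 hmi]] := mu_coef_attained ha hr ha0'.
have [j0 [hj0 hmj]] := mu_coef_attained hc hr hc0'.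
set n := (i0 + j0)%N.
have hin : (i0 < n.+1)%N by rewrite ltnS leq_addr.
have hrn : 0 < r ^+ n by rewrite exprn_gt0.
have hmain : abs (a i0 * c (n - i0)%N) * r ^+ n = mu_coef r a * mu_coef r c.
  by rewrite abs_cauchy_term ?leq_addr // addKn hi0 hj0.
apply: le_trans (mu_coef_ub n hac hr).
rewrite /cauchy_prod (bigD1 (Ordinal hin)) //= absD_eq ?hmain //.
rewrite -[abs (a i0 * _)](mulfK (lt0r_neq0 hrn)) hmain.
apply: abs_sum_lt; first by rewrite !divr_gt0 ?mulr_gt0.
move=> i hi; have hii : val i != i0 by apply: contraNneq hi => h; apply/eqP/val_inj.
have hin' : (i <= n)%N by rewrite -ltnS.
rewrite ltr_pdivlMr // abs_cauchy_term //.
exact: abs_cauchy_term_lt.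
Qed.

Lemma mu_coef_cauchy_prod a c r : EC a -> EC c -> 0 < r ->
  mu_coef r (cauchy_prod a c) = mu_coef r a * mu_coef r c.
Proof.
by move=> ha hc hr; apply/eqP; rewrite eq_le mu_coef_cauchy_prod_le ?mu_coef_cauchy_prod_ge.
Qed.

Local Notation rep := (entire_rep abs).

Lemma entire_rep_ext F G a : (forall z, F z = G z) -> rep F a -> rep G a.
Proof. by move=> h [ha hF]; split => // z; rewrite -h. Qed.

Lemma entire_rep_zero F a : rep F a -> (forall n, a n = 0) -> forall z, F z = 0.
Proof.
move=> [_ hF] ha z; apply: (abs_conv_uniq (hF z)).
apply: (@abs_conv_ext (fun _ => 0)); last exact: abs_conv_cst.
by move=> n; apply: big1 => i _; rewrite ha mul0r.
Qed.

Lemma entire_repB F G a c : rep F a -> rep G c ->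
  rep (fun z => F z - G z) (fun n => a n - c n).
Proof.
move=> [ha hF] [hc hG]; split.
  move=> r hr e he; have [N1 hN1] := ha r hr e he; have [N2 hN2] := hc r hr e he.
  exists (maxn N1 N2) => n hn.
  have h1 := hN1 n (leq_trans (leq_maxl _ _) hn).
  have h2 := hN2 n (leq_trans (leq_maxr _ _) hn).
  apply: le_lt_trans (_ : Num.max (abs (a n)) (abs (c n)) * r ^+ n < e).
    apply: ler_wpM2r; first by rewrite exprn_ge0 // ltW.
    by apply: le_trans (absD_le_max _ _) _; rewrite absN.
  by rewrite maxr_pMl ?exprn_ge0 ?ltW // gt_max h1 h2.
move=> z; apply: (@abs_conv_ext (fun N => \sum_(i < N) a i * z ^+ i - \sum_(i < N) c i * z ^+ i)).
  by move=> N; rewrite -sumrB; apply: eq_bigr => i _; rewrite mulrBl.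
exact: abs_convB.
Qed.

Lemma entire_repM F G a c : rep F a -> rep G c ->
  rep (fun z => F z * G z) (cauchy_prod a c).
Proof.
move=> [ha hF] [hc hG]; split; first exact: entire_coefs_cauchy_prod.
move=> z; have := abs_conv_series_cauchy_prod (entire_coefs_null_terms z ha)
  (entire_coefs_null_terms z hc) (hF z) (hG z).
apply: abs_conv_ext => N; apply: eq_bigr => n _.
rewrite /cauchy_prod mulr_suml; apply: eq_bigr => i _.
have hi : (i <= n)%N by rewrite -ltnS.
by rewrite -[in z ^+ n](subnKC hi) exprD; ring.
Qed.

Lemma entire_rep_scale F a al : abs al = 1 -> rep F a ->
  rep (fun z => F (al * z)) (fun n => a n * al ^+ n).
Proof.
move=> hal [ha hF]; split.
  move=> r hr e he; have [N hN] := ha r hr e he; exists N => n hn.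
  by rewrite absM absX hal expr1n mulr1; apply: hN.
move=> z; apply: (abs_conv_ext _ (hF (al * z))) => N; apply: eq_bigr => i _.
by rewrite exprMn mulrA.
Qed.

Lemma abs_coef_term_lt_lowest a k0 B z :
  (forall i, (i < k0)%N -> a i = 0) -> (forall n, abs (a n) <= B) ->
  0 < abs z < 1 -> abs z * B < abs (a k0) ->
  forall i, i != k0 -> abs (a i * z ^+ i) < abs (a k0 * z ^+ k0).
Proof.
move=> hlow hB /andP [hz0 hz1] hk i hik.
have hB0 : 0 <= B := le_trans (abs_ge0 _) (hB 0%N).
have hA : 0 < abs (a k0) by apply: le_lt_trans hk; rewrite mulr_ge0 ?abs_ge0.
have hzk : 0 < abs z ^+ k0 by rewrite exprn_gt0.
rewrite !absM !absX.
case: (ltngtP i k0) => h; last by rewrite h eqxx in hik.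
  by rewrite hlow // abs0 mul0r mulr_gt0.
apply: le_lt_trans (_ : B * abs z ^+ k0.+1 < _).
  apply: ler_pM; rewrite ?abs_ge0 ?hB //; first exact: exprn_ge0 (abs_ge0 z).
  by rewrite ler_wiXn2l ?abs_ge0 ?ltW.
by rewrite exprS mulrA ltr_pM2r // mulrC.
Qed.

Lemma entire_rep_neq0_near0 F a : rep F a -> (exists n, a n != 0) ->
  exists d, 0 < d /\ forall z, 0 < abs z < d -> F z != 0.
Proof.
move=> [ha hF] exn; case: (ex_minnP exn) => k0 hk0 hmin.
have hlow i : (i < k0)%N -> a i = 0.
  by move=> hi; apply/eqP; apply: contraTT hi => /hmin; rewrite -leqNgt.
have [B [hB0 hB]] := entire_coefs_bounded ha ltr01.
have {}hB n : abs (a n) <= B by have := hB n; rewrite expr1n mulr1.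
have hA0 := abs_gt0 hk0.
exists (Num.min 1 (abs (a k0) / B)); split; first by rewrite lt_min ltr01 divr_gt0.
move=> z /andP [hz0]; rewrite lt_min => /andP [hz1 hz2].
rewrite ltr_pdivlMr // in hz2.
have hdom := abs_coef_term_lt_lowest hlow hB (introT andP (conj hz0 hz1)) hz2.
set A := abs (a k0 * z ^+ k0) in hdom.
have hA : 0 < A by rewrite /A absM absX mulr_gt0 ?exprn_gt0.
have hsum N : (k0 < N)%N -> abs (\sum_(i < N) a i * z ^+ i) = A.
  move=> hN; rewrite (bigD1 (Ordinal hN)) //= absD_eq //.
  apply: abs_sum_lt => // i hi; apply: hdom.
  by apply: contraNneq hi => h; apply/eqP/val_inj.
have [N hN] := hF z A hA.
set M := maxn N k0.+1.
have hM : (k0 < M)%N by rewrite leq_max leqnn orbT.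
apply/eqP => hF0; have := hN M (leq_maxl _ _).
by rewrite hF0 subr0 hsum // ltxx.
Qed.

Lemma entire_rep_uniq F a a' : rep F a -> rep F a' -> a = a'.
Proof.
move=> ha ha'; apply: funext => n; apply/eqP; rewrite -subr_eq0; apply/negPn/negP => hn.
have [d [hd hz]] := entire_rep_neq0_near0 (entire_repB ha ha') (ex_intro _ n hn).
have [z hz'] := exists_abs_small hd.
by have := hz z hz'; rewrite subrr eqxx.
Qed.

Lemma entire_rep_coef_neq0 F a : rep F a -> (exists z, F z != 0) -> exists n, a n != 0.
Proof.
move=> ha [z hz]; apply/not_existsP => h; move: hz; rewrite (entire_rep_zero ha) ?eqxx //.
by move=> n; apply/eqP/negPn/negP/h.
Qed.

(* The coefficient of z^k in a_n (z + b)^n. *)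
Definition shift_coef (a : nat -> K) (b : K) k n := a n * 'C(n, k)%:R * b ^+ (n - k).

Lemma shift_coef_small a b k n : (n < k)%N -> shift_coef a b k n = 0.
Proof. by move=> h; rewrite /shift_coef bin_small // mulr0 mul0r. Qed.

Lemma abs_shift_coef_le a b k n (r : R) : 0 < r -> abs b <= r ->
  abs (shift_coef a b k n) * r ^+ k <= abs (a n) * r ^+ n.
Proof.
move=> hr hb.
case: (ltnP n k) => h.
  by rewrite shift_coef_small // abs0 mul0r mulr_ge0 ?abs_ge0 ?exprn_ge0 ?ltW.
have -> : r ^+ n = r ^+ (n - k) * r ^+ k by rewrite -exprD subnK.
rewrite /shift_coef !absM absX mulrA.
rewrite ler_wpM2r ?exprn_ge0 ?(ltW hr) // -mulrA ler_wpM2l ?abs_ge0 //.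
rewrite -[X in _ <= X]mul1r; apply: ler_pM; rewrite ?abs_ge0 ?abs_natr_le1 //.
  exact: exprn_ge0 (abs_ge0 b).
exact: lerXn2r_ge0 (abs_ge0 b) hb.
Qed.

Lemma shift_coef_null a b k : EC a -> null_seq (shift_coef a b k).
Proof.
move=> ha e he.
have hr : 0 < Num.max (abs b) 1 by rewrite lt_max ltr01 orbT.
have hb : abs b <= Num.max (abs b) 1 by rewrite le_max lexx.
have hrk : 0 < Num.max (abs b) 1 ^+ k by rewrite exprn_gt0.
have [N hN] := ha _ hr (e * _) (mulr_gt0 he hrk).
exists N => n hn; rewrite -(ltr_pM2r hrk).
exact: le_lt_trans (abs_shift_coef_le _ _ _ hr hb) (hN n hn).
Qed.

Lemma sum_shift_coef a b z N n : (n < N)%N ->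
  \sum_(k < N) shift_coef a b k n * z ^+ k = a n * (z + b) ^+ n.
Proof.
move=> hn; rewrite addrC exprDn mulr_sumr.
rewrite (big_ord_widen N (fun k => a n * (b ^+ (n - k) * z ^+ k *+ 'C(n, k))) hn).
rewrite [RHS]big_mkcond /=; apply: eq_bigr => k _.
case: ifP => hk; first by rewrite /shift_coef mulr_natr; ring.
by rewrite shift_coef_small ?mul0r // ltnNge -ltnS hk.
Qed.

Lemma exists_shift_limits a b : EC a ->
  exists c, forall k, abs_conv abs (fun N => \sum_(n < N) shift_coef a b k n) (c k).
Proof.
move=> ha; have [c hc] := choice (fun k => series_conv_of_null (shift_coef_null b k ha)).
by exists c.
Qed.

Section Shift.
Variables (a c : nat -> K) (b : K).
Hypothesis ha : EC a.
Hypothesis hc : forall k, abs_conv abs (fun N => \sum_(n < N) shift_coef a b k n) (c k).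

Lemma abs_shift_limit_tail_le k R0 M N0 : 0 < R0 -> abs b <= R0 -> 0 <= M ->
  (forall n, (N0 <= n)%N -> abs (a n) * R0 ^+ n <= M) ->
  abs (c k - \sum_(n < N0) shift_coef a b k n) * R0 ^+ k <= M.
Proof.
move=> hR hb hM haM; have hRk : 0 < R0 ^+ k by rewrite exprn_gt0.
rewrite -ler_pdivlMr //; apply: (abs_series_tail_le (hc k)); first by rewrite divr_ge0 // ltW.
move=> n hn; rewrite ler_pdivlMr //.
exact: le_trans (abs_shift_coef_le _ _ _ hR hb) (haM n hn).
Qed.

Lemma mu_coef_shift_le r : 0 < r -> abs b <= r -> mu_coef r c <= mu_coef r a.
Proof.
move=> hr hb; apply: mu_coef_le => k.
have := @abs_shift_limit_tail_le k r (mu_coef r a) 0 hr hb (mu_coef_ge0 ha hr).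
by rewrite big_ord0 subr0; apply=> n _; apply: mu_coef_ub.
Qed.

Lemma entire_coefs_shift : EC c.
Proof.
move=> r hr e he.
set R0 := Num.max r (abs b).
have hR : 0 < R0 by rewrite lt_max hr.
have hb : abs b <= R0 by rewrite le_max lexx orbT.
have he2 : 0 < e / 2 by rewrite divr_gt0.
have [N hN] := @ha R0 hR (e / 2) he2.
exists N => k hk.
have := @abs_shift_limit_tail_le k R0 (e / 2) N hR hb (ltW he2).
rewrite big1 ?subr0 => [hck|i _]; last by rewrite shift_coef_small // (leq_trans (ltn_ord i)).
apply: le_lt_trans (_ : abs (c k) * R0 ^+ k < e); last first.
  by apply: le_lt_trans (hck _) _; [move=> n /hN /ltW | rewrite ltr_pdivrMr // ltr_pMr // ltr1n].
by rewrite ler_wpM2l ?abs_ge0 // (lerXn2r_ge0 _ (ltW hr)) // le_max lexx.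
Qed.

Lemma entire_rep_shift F : rep F a -> rep (fun z => F (z + b)) c.
Proof.
move=> [_ hF]; split; first exact: entire_coefs_shift.
move=> z; set R0 := Num.max (Num.max (abs z) (abs b)) 1.
have hR : 0 < R0 by rewrite lt_max ltr01 orbT.
have hb : abs b <= R0 by rewrite !le_max lexx !orbT.
have hz : abs z <= R0 by rewrite !le_max lexx.
apply: (abs_conv_null_diff (hF (z + b))) => e he.
have he2 : 0 < e / 2 by rewrite divr_gt0.
have [N hN] := @ha R0 hR (e / 2) he2.
exists N => M hM.
have -> : \sum_(n < M) a n * (z + b) ^+ n =
    \sum_(k < M) (\sum_(n < M) shift_coef a b k n) * z ^+ k.
  rewrite (eq_bigr (fun n : 'I_M => \sum_(k < M) shift_coef a b k n * z ^+ k)).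
    by rewrite exchange_big /=; apply: eq_bigr => k _; rewrite mulr_suml.
  by move=> n _; rewrite sum_shift_coef.
rewrite -sumrB; apply: abs_sum_lt => // k _.
rewrite -mulrBl absM absX.
have hck := @abs_shift_limit_tail_le k R0 (e / 2) M hR hb (ltW he2).
apply: le_lt_trans (_ : abs (c k - \sum_(n < M) shift_coef a b k n) * R0 ^+ k < e).
  by rewrite ler_wpM2l ?abs_ge0 // lerXn2r_ge0 ?abs_ge0.
apply: le_lt_trans (hck _) _; last by rewrite ltr_pdivrMr // ltr_pMr // ltr1n.
by move=> n hn; apply/ltW/hN/(leq_trans hM hn).
Qed.

End Shift.

Lemma entire_rep_affine F a al be : abs al = 1 -> rep F a ->
  exists c, rep (fun z => F (al * z + be)) c /\
    forall r, 0 < r -> abs be <= r -> mu_coef r c <= mu_coef r a.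
Proof.
move=> hal ha; have [haE _] := ha.
have [c hc] := exists_shift_limits be haE.
exists (fun n => c n * al ^+ n); split.
  exact: (entire_rep_scale hal (entire_rep_shift haE hc ha)).
move=> r hr hbe; rewrite (@mu_coef_ext _ c); first exact: (@mu_coef_shift_le _ _ _ haE hc r hr hbe).
by move=> n; rewrite absM absX hal expr1n mulr1.
Qed.

(* The inverse of z |-> al z + be is again such a map, so the inequality reverses. *)
Lemma mu_coef_affine F a c al be r : abs al = 1 -> 0 < r -> abs be <= r ->
  rep F a -> rep (fun z => F (al * z + be)) c -> mu_coef r c = mu_coef r a.
Proof.
move=> hal hr hbe ha hc.
have [c1 [hc1 hm1]] := entire_rep_affine be hal ha.
rewrite -(entire_rep_uniq hc1 hc).
apply/eqP; rewrite eq_le hm1 //=.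
have hal0 : al != 0 by apply: contra_eq_neq hal => ->; rewrite abs0 eq_sym oner_neq0.
have hal' : abs al^-1 = 1 by rewrite absV hal invr1.
have [c2 [hc2 hm2]] := entire_rep_affine (- (al^-1 * be)) hal' hc1.
have hc2' : rep F c2 by apply: entire_rep_ext hc2 => z /=; congr F; field.
by rewrite (entire_rep_uniq ha hc2') hm2 // absN absM hal' mul1r.
Qed.

Local Notation mue r F := (mu_entire abs r F).

Lemma coefsE F a : rep F a -> coefs abs F = a.
Proof.
move=> ha; rewrite /coefs; case: pselect => [H|H]; last by exfalso; apply: H; exists a.
by case: (cid H) => /= a' ha'; apply: entire_rep_uniq ha' ha.
Qed.

Lemma mu_entireE F a r : rep F a -> mue r F = mu_coef r a.
Proof. by move=> ha; rewrite /mu_entire (coefsE ha). Qed.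

Lemma entire_neq0_near0 F : entire abs F -> (exists z, F z != 0) ->
  exists d, 0 < d /\ forall z, 0 < abs z < d -> F z != 0.
Proof. by move=> [a ha] hz; apply: (entire_rep_neq0_near0 ha); apply: entire_rep_coef_neq0 ha hz. Qed.

Lemma mu_entire_gt0 F r : entire abs F -> (exists z, F z != 0) -> 0 < r -> 0 < mue r F.
Proof.
move=> [a ha] hz hr; have [haE _] := ha.
by rewrite (mu_entireE _ ha); apply: mu_coef_gt0 => //; apply: entire_rep_coef_neq0 ha hz.
Qed.

Lemma entireM F G : entire abs F -> entire abs G -> entire abs (fun z => F z * G z).
Proof. by move=> [a ha] [c hc]; exists (cauchy_prod a c); apply: entire_repM. Qed.

Lemma entireB F G : entire abs F -> entire abs G -> entire abs (fun z => F z - G z).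
Proof. by move=> [a ha] [c hc]; eexists; apply: entire_repB ha hc. Qed.

Lemma mu_entireM F G r : entire abs F -> entire abs G -> 0 < r ->
  mue r (fun z => F z * G z) = mue r F * mue r G.
Proof.
move=> [a ha] [c hc] hr; have [haE _] := ha; have [hcE _] := hc.
rewrite (mu_entireE _ (entire_repM ha hc)) (mu_entireE _ ha) (mu_entireE _ hc).
exact: mu_coef_cauchy_prod.
Qed.

Lemma mu_entireB_le F G r : entire abs F -> entire abs G -> 0 < r ->
  mue r (fun z => F z - G z) <= Num.max (mue r F) (mue r G).
Proof.
move=> [a ha] [c hc] hr; have [haE _] := ha; have [hcE _] := hc.
rewrite (mu_entireE _ (entire_repB ha hc)) (mu_entireE _ ha) (mu_entireE _ hc).
apply: mu_coef_le => n; have hrn : 0 <= r ^+ n by rewrite exprn_ge0 // ltW.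
apply: le_trans (_ : Num.max (abs (a n)) (abs (c n)) * r ^+ n <= _).
  by rewrite ler_wpM2r //; apply: le_trans (absD_le_max _ _) _; rewrite absN.
by rewrite maxr_pMl // ge_max !le_max !mu_coef_ub ?orbT.
Qed.

Lemma entire_affine F al be : abs al = 1 -> entire abs F ->
  entire abs (fun z => F (al * z + be)).
Proof. by move=> hal [a ha]; have [c [hc _]] := entire_rep_affine be hal ha; exists c. Qed.

Lemma mu_entire_affine F al be r : abs al = 1 -> 0 < r -> abs be <= r -> entire abs F ->
  mue r (fun z => F (al * z + be)) = mue r F.
Proof.
move=> hal hr hbe [a ha]; have [c [hc _]] := entire_rep_affine be hal ha.
by rewrite (mu_entireE _ hc) (mu_entireE _ ha); apply: mu_coef_affine hc.
Qed.

Lemma entireM_neq0 F G : entire abs F -> entire abs G -> (exists z, F z != 0) ->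
  (exists z, G z != 0) -> exists z, F z * G z != 0.
Proof.
move=> eF eG nF nG.
have [d1 [hd1 h1]] := entire_neq0_near0 eF nF; have [d2 [hd2 h2]] := entire_neq0_near0 eG nG.
have [z [hz1 hz2 _]] := exists_abs_small3 hd1 hd2 ltr01.
by exists z; rewrite mulf_neq0 ?h1 ?h2.
Qed.

Lemma affine_neq0 (F : K -> K) al be : al != 0 -> (exists z, F z != 0) ->
  exists z, F (al * z + be) != 0.
Proof.
move=> hal [z0 hz0]; exists (al^-1 * (z0 - be)).
by have -> : al * (al^-1 * (z0 - be)) + be = z0 by field.
Qed.

(* Two representations g/h and g'/h' of f agree near 0 (off the zeros of the
   auxiliary functions), so g h' = g' h by uniqueness of coefficients, and
   multiplicativity of mu gives the same ratio. *)
Lemma mero_rep_mu_ratio_uniq f g h g' h' r : mero_rep abs f g h -> mero_rep abs f g' h' ->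
  0 < r -> mue r g / mue r h = mue r g' / mue r h'.
Proof.
case=> eg eh hnz [k [ek knz hk]]; case=> eg' eh' hnz' [k' [ek' knz' hk']] hr.
have [d1 [hd1 hk1]] := entire_neq0_near0 ek knz.
have [d2 [hd2 hk2]] := entire_neq0_near0 ek' knz'.
move: (eg) (eh) (eg') (eh') => [ag hag] [ah hah] [ag' hag'] [ah' hah'].
have hD := entire_repB (entire_repM hag hah') (entire_repM hag' hah).
have hcoef : cauchy_prod ag ah' = cauchy_prod ag' ah.
  apply: funext => n; apply/eqP; rewrite -subr_eq0; apply/negPn/negP => hn.
  have [d3 [hd3 hD3]] := entire_rep_neq0_near0 hD (ex_intro _ n hn).
  have [z [hz1 hz2 hz3]] := exists_abs_small3 hd1 hd2 hd3.
  have [hhz hfz] := hk z (hk1 z hz1); have [hhz' hfz'] := hk' z (hk2 z hz2).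
  by have := hD3 z hz3; rewrite subr_eq0 -eqr_div // -hfz -hfz' eqxx.
have e : mue r g * mue r h' = mue r g' * mue r h.
  rewrite -!mu_entireM // (mu_entireE _ (entire_repM hag hah')) hcoef.
  by rewrite (mu_entireE _ (entire_repM hag' hah)).
have mh := mu_entire_gt0 eh hnz hr; have mh' := mu_entire_gt0 eh' hnz' hr.
by apply/eqP; rewrite (eqr_div _ _ (lt0r_neq0 mh) (lt0r_neq0 mh')) e.
Qed.

Lemma mero_rep_meromorphic f g h : mero_rep abs f g h -> meromorphic abs f.
Proof. by exists (g, h). Qed.

Lemma mu_mero_rep f g h r : mero_rep abs f g h -> 0 < r -> mu abs r f = mue r g / mue r h.
Proof.
move=> hf hr; rewrite /mu; case: pselect => [H|H]; last by exfalso; apply: H; exists (g, h).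
by case: (cid H) => /= gh hgh; apply: mero_rep_mu_ratio_uniq hgh hf hr.
Qed.

Lemma mero_rep_num_neq0 f g h : mero_rep abs f g h -> ~ mero_zero abs f -> exists z, g z != 0.
Proof.
move=> [eg eh hnz [k [ek knz hk]]] hf; apply/not_existsP => hg; apply: hf.
exists k; split => // z hz; have [_ ->] := hk z hz.
by move/negP/negPn/eqP: (hg z) => ->; rewrite mul0r.
Qed.

Lemma mero_rep_affine f g h al be : abs al = 1 -> mero_rep abs f g h ->
  mero_rep abs (fun z => f (al * z + be)) (fun z => g (al * z + be))
    (fun z => h (al * z + be)).
Proof.
move=> hal [eg eh hnz [k [ek knz hk]]].
have hal0 : al != 0 by apply: contra_eq_neq hal => ->; rewrite abs0 eq_sym oner_neq0.
split; [exact: entire_affine | exact: entire_affine | exact: affine_neq0 |].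
exists (fun z => k (al * z + be)); split; [exact: entire_affine | exact: affine_neq0 |].
by move=> z hz; apply: hk.
Qed.

Lemma mero_repB f1 g1 h1 f2 g2 h2 : mero_rep abs f1 g1 h1 -> mero_rep abs f2 g2 h2 ->
  mero_rep abs (fun z => f1 z - f2 z) (fun z => g1 z * h2 z - g2 z * h1 z)
    (fun z => h1 z * h2 z).
Proof.
move=> [eg1 eh1 hnz1 [k1 [ek1 knz1 hk1]]] [eg2 eh2 hnz2 [k2 [ek2 knz2 hk2]]].
split; [by apply: entireB; apply: entireM | exact: entireM | exact: entireM_neq0 |].
exists (fun z => k1 z * k2 z); split; [exact: entireM | exact: entireM_neq0 |].
move=> z /=; rewrite mulf_eq0 negb_or => /andP [hz1 hz2].
have [h1z ->] := hk1 z hz1; have [h2z ->] := hk2 z hz2.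
by split; [rewrite mulf_neq0 | field; rewrite h1z h2z].
Qed.

Lemma mero_rep_div f1 g1 h1 f2 g2 h2 : mero_rep abs f1 g1 h1 -> mero_rep abs f2 g2 h2 ->
  (exists z, g2 z != 0) ->
  mero_rep abs (fun z => f1 z / f2 z) (fun z => g1 z * h2 z) (fun z => h1 z * g2 z).
Proof.
move=> [eg1 eh1 hnz1 [k1 [ek1 knz1 hk1]]] [eg2 eh2 hnz2 [k2 [ek2 knz2 hk2]]] hg2.
split; [exact: entireM | exact: entireM | exact: entireM_neq0 |].
exists (fun z => k1 z * (k2 z * g2 z)); split.
- by apply: entireM => //; apply: entireM.
- by apply: entireM_neq0 => //; [apply: entireM | apply: entireM_neq0].
move=> z /=; rewrite !mulf_eq0 !negb_or => /andP [hz1 /andP [hz2 hg]].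
have [h1z ->] := hk1 z hz1; have [h2z ->] := hk2 z hz2.
by split; [rewrite h1z hg | field; rewrite h1z h2z hg].
Qed.

Lemma mu_gt0 f r : meromorphic abs f -> ~ mero_zero abs f -> 0 < r -> 0 < mu abs r f.
Proof.
move=> [[g h] /= hf] hf0 hr; have [eg eh nh _] := hf.
rewrite (mu_mero_rep hf hr) divr_gt0 ?mu_entire_gt0 //.
exact: mero_rep_num_neq0 hf hf0.
Qed.

Lemma mu_div f1 f2 r : meromorphic abs f1 -> meromorphic abs f2 -> ~ mero_zero abs f2 ->
  0 < r -> mu abs r (fun z => f1 z / f2 z) = mu abs r f1 / mu abs r f2.
Proof.
move=> [[g1 h1] /= hf1] [[g2 h2] /= hf2] hf20 hr.
have hg2 := mero_rep_num_neq0 hf2 hf20.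
have [eg1 eh1 nh1 _] := hf1; have [eg2 eh2 nh2 _] := hf2.
have mh1 := mu_entire_gt0 eh1 nh1 hr; have mh2 := mu_entire_gt0 eh2 nh2 hr.
have mg2 := mu_entire_gt0 eg2 hg2 hr.
rewrite (mu_mero_rep (mero_rep_div hf1 hf2 hg2) hr) (mu_mero_rep hf1 hr) (mu_mero_rep hf2 hr).
by rewrite !mu_entireM //; field; rewrite !lt0r_neq0.
Qed.

Section AffineMap.
Variables (al be : K) (r : R).
Hypotheses (hal : abs al = 1) (hr : 0 < r) (hbe : abs be <= r).
Let L z := al * z + be.

Lemma meromorphic_affine f : meromorphic abs f -> meromorphic abs (f \o L).
Proof. by move=> [[g h] /= hf]; apply: mero_rep_meromorphic (mero_rep_affine be hal hf). Qed.

Lemma mu_affine f : meromorphic abs f -> mu abs r (f \o L) = mu abs r f.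
Proof.
move=> [[g h] /= hf]; have [eg eh _ _] := hf.
rewrite (mu_mero_rep (mero_rep_affine be hal hf) hr) (mu_mero_rep hf hr).
by rewrite !mu_entire_affine.
Qed.

Lemma meromorphic_DeltaL f : meromorphic abs f -> meromorphic abs (DeltaL L f).
Proof.
by move=> [[g h] /= hf]; apply: mero_rep_meromorphic (mero_repB (mero_rep_affine be hal hf) hf).
Qed.

(* With f = g / h, Delta_L f = (g(L) h - g h(L)) / (h(L) h), and the numerator has
   mu at most mu(r, g) mu(r, h) by the ultrametric inequality. *)
Lemma mu_DeltaL_le f : meromorphic abs f -> mu abs r (DeltaL L f) <= mu abs r f.
Proof.
move=> [[g h] /= hf]; have [eg eh nh _] := hf.
rewrite (mu_mero_rep (mero_repB (mero_rep_affine be hal hf) hf) hr) (mu_mero_rep hf hr).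
have egL := entire_affine be hal eg; have ehL := entire_affine be hal eh.
have mh := mu_entire_gt0 eh nh hr.
rewrite mu_entireM // mu_entire_affine // ler_pdivrMr ?mulr_gt0 //.
rewrite (_ : mue r g / mue r h * (mue r h * mue r h) = mue r g * mue r h); last first.
  by field; rewrite gt_eqF.
apply: le_trans (mu_entireB_le (entireM egL eh) (entireM eg ehL) hr) _.
by rewrite !mu_entireM // !mu_entire_affine // maxxx.
Qed.

Lemma meromorphic_DeltaLn f m : meromorphic abs f -> meromorphic abs (DeltaLn L m f).
Proof. by move=> hf; elim: m => [|m IH] //=; apply: meromorphic_DeltaL. Qed.

Lemma mu_DeltaLn_le f m : meromorphic abs f -> mu abs r (DeltaLn L m f) <= mu abs r f.
Proof.
move=> hf; elim: m => [|m IH] //=.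
by apply: le_trans IH; apply/mu_DeltaL_le/meromorphic_DeltaLn.
Qed.

End AffineMap.
End NonArchimedean.

Unset Implicit Arguments.

Theorem lemma2p3 (R : realType) (K : closedFieldType) (abs : K -> R)
  (Habs : nonarch_complete_field abs)
  (a b : K) (Ha : abs a = 1)
  (f : K -> K) (Hf : meromorphic abs f) (Hf0 : ~ mero_zero abs f)
  (m : nat) (Hm : (0 < m)%N) :
  let L := fun z : K => a * z + b in
  forall r : R, abs b < r ->
    [/\ mu abs r (f \o L) = mu abs r f,
        mu abs r (fun z => (f \o L) z / f z) = 1
      & mu abs r (fun z => DeltaLn L m f z / f z) <= 1].
Proof.
move=> L r hbr.
have hr : 0 < r := le_lt_trans (abs_ge0 Habs b) hbr.
have hb : abs b <= r := ltW hbr.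
have hmuf := mu_gt0 Habs Hf Hf0 hr.
have hfL : meromorphic abs (f \o L) := meromorphic_affine Habs b Ha Hf.
have hmuL : mu abs r (f \o L) = mu abs r f := mu_affine Habs Ha hr hb Hf.
split => //.
- by rewrite (mu_div Habs) // hmuL divff // gt_eqF.
- have hD : meromorphic abs (DeltaLn L m f) := meromorphic_DeltaLn Habs b Ha m Hf.
  by rewrite (mu_div Habs) // ler_pdivrMr // mul1r (mu_DeltaLn_le Habs).
Qed.
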